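(* Let $G$ be a finite simple connected graph with no $K_5$ minor, not isomorphic to $C_5$, that has no dynamic $4$-coloring, and suppose $G$ has the minimum number of edges among all such graphs (i.e., every finite simple connected graph with no $K_5$ minor, not isomorphic to $C_5$, and with fewer edges than $G$ is dynamically $4$-colorable). Then $G$ has no separation $(A,B)$ with $|A\cap B|=2$ satisfying both of the following: (i) each vertex in $A\cap B$ has at least two neighbors in the induced subgraph $G[A]$; (ii) if $B\setminus A$ contains a vertex whose set of neighbors (in $G$) is exactly $A\cap B$, then either the two vertices of $A\cap B$ are adjacent or $A\setminus B$ contains a vertex whose set of neighbors is exactly $A\cap B$.
   Context: All graphs are finite and simple. Given a proper vertex coloring of a graph, a vertex $v$ is happy if either $v$ has at most one neighbor or $v$ has two neighbors receiving distinct colors. A dynamic $4$-coloring is a proper vertex coloring with at most $4$ colors in which every vertex is happy. A separation of a graph $G$ is a pair $(A,B)$ of subsets of $V(G)$ with $A\cup B=V(G)$, $A\setminus B\neq\emptyset$, $B\setminus A\neq\emptyset$, and no vertex of $A\setminus B$ adjacent to a vertex of $B\setminus A$; its order is $|A\cap B|$. *)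

From mathcomp Require Import all_boot.
Set Implicit Arguments. Unset Strict Implicit. Unset Printing Implicit Defensive.

Definition simple_graph (T : finType) (e : rel T) : Prop :=
  symmetric e /\ irreflexive e.

Definition graph_connected (T : finType) (e : rel T) : Prop :=
  forall x y : T, connect e x y.

Definition nedges (T : finType) (e : rel T) : nat :=
  #|[set p : T * T | e p.1 p.2]| %/ 2.

Definition induced_connected (T : finType) (e : rel T) (S : {set T}) : Prop :=
  forall x y, x \in S -> y \in S ->
    connect (fun a b => [&& a \in S, b \in S & e a b]) x y.

Definition has_K5_minor (T : finType) (e : rel T) : Prop :=
  exists f : 'I_5 -> {set T},
    (forall i, f i != set0) /\
    (forall i, induced_connected e (f i)) /\
    (forall i j, i != j -> [disjoint f i & f j]) /\
    (forall i j, i != j -> exists x y, [/\ x \in f i, y \in f j & e x y]).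

Definition c5_rel (i j : 'I_5) : bool :=
  (val j == (val i).+1 %% 5) || (val i == (val j).+1 %% 5).

Definition iso_C5 (T : finType) (e : rel T) : Prop :=
  exists h : T -> 'I_5, bijective h /\ forall x y, e x y = c5_rel (h x) (h y).

Definition proper_coloring (T : finType) (e : rel T) (k : nat) (c : T -> 'I_k) : Prop :=
  forall x y, e x y -> c x != c y.

Definition happy (T : finType) (e : rel T) (k : nat) (c : T -> 'I_k) (v : T) : Prop :=
  #|[set u | e v u]| <= 1 \/ exists u w, [/\ e v u, e v w & c u != c w].

Definition dynamic_coloring (T : finType) (e : rel T) (k : nat) (c : T -> 'I_k) : Prop :=
  proper_coloring e c /\ forall v, happy e c v.

Definition dyn4_colorable (T : finType) (e : rel T) : Prop :=
  exists c : T -> 'I_4, dynamic_coloring e c.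

Definition separation (T : finType) (e : rel T) (A B : {set T}) : Prop :=
  [/\ A :|: B = setT, A :\: B != set0, B :\: A != set0 &
      forall x y, x \in A :\: B -> y \in B :\: A -> ~~ e x y].

Definition nbhd (T : finType) (e : rel T) (v : T) : {set T} := [set u | e v u].

From mathcomp Require Import all_boot all_fingroup.
From Stdlib Require Import Classical.
Set Implicit Arguments. Unset Strict Implicit. Unset Printing Implicit Defensive.

(* Let (A, B) be such a separation with A :&: B = {x, y}; as G is connected, one of x, y,
   say x, has a neighbour b in B :\: A.  Each side with one edge through the cut deleted is a
   smaller K5-minor-free graph, so by minimality it has a dynamic 4-colouring, or, if it is
   C5, a colouring that fails only at a chosen root and only in a controlled way.  After a
   permutation of the colours on the B side the two colourings agree on x and y and glue to a
   dynamic colouring of G, each cut vertex being made happy by the side on which it sees two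
   colours.
   - If x and y are adjacent, colour G[A] rooted at x and G[B] rooted at y.
   - If they are non-adjacent but joined inside A, colour G[A] rooted at x.  The B side must
     repeat the equality pattern of the colours of x and y: colour G[B] plus the edge xy, or
     G[B] with y identified with x.  Both are minors of G (contract a path of A, resp. all of
     A), and condition (ii) ensures that the identification keeps B :\: A happy.
   - Otherwise colour G[B] and the components of x and of y in G[A] separately. *)

Section InducedConnectivity.
Variable T : finType.
Implicit Types (X K : {set T}) (r : rel T).

Definition induced X r : rel T := fun a b => [&& a \in X, b \in X & r a b].

Lemma connect_stable r K a b :
  a \in K -> (forall u v, u \in K -> r u v -> v \in K) -> connect r a b -> b \in K.
Proof.
move=> aK Kr /connectP [p pth ->]; elim: p a aK pth => //= c p IH a aK /andP [rac pth].
exact: IH (Kr _ _ aK rac) pth.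
Qed.

Lemma connect_induced_mem X r a b : a \in X -> connect (induced X r) a b -> b \in X.
Proof. by move=> aX; apply: (connect_stable aX) => u v _ /and3P []. Qed.

Lemma induced_sym X r : symmetric r -> symmetric (induced X r).
Proof. by move=> sr a b; rewrite /induced sr andbCA. Qed.

Lemma boundary_edge r K v t : graph_connected r -> v \in K -> t \notin K ->
  exists w w', [/\ w \in K, w' \notin K & r w w'].
Proof.
move=> rc vK tK.
case: (boolP [exists w, exists w', [&& w \in K, w' \notin K & r w w']]).
  by case/existsP=> w /existsP [w' /and3P [wK w'K rww']]; exists w, w'.
rewrite negb_exists => /forallP noedge; case/negP: tK.
apply: (connect_stable vK _ (rc v t)) => u w uK ruw; apply: contraT => wK.
by move: (noedge u); rewrite negb_exists => /forallP /(_ w); rewrite uK wK ruw.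
Qed.

Definition component X r x : {set T} := [set w | connect (induced X r) x w].

Lemma component_self X r x : x \in component X r x.
Proof. by rewrite inE connect0. Qed.

Lemma component_mem X r x u : x \in X -> u \in component X r x -> u \in X.
Proof. by move=> xX; rewrite inE; apply: connect_induced_mem. Qed.

Lemma component_step X r x u v :
  x \in X -> u \in component X r x -> v \in X -> r u v -> v \in component X r x.
Proof.
move=> xX uC vX ruv; have uX := component_mem xX uC.
by move: uC; rewrite !inE => C; apply: connect_trans C (connect1 _); rewrite /induced uX vX.
Qed.

Lemma component_disjoint X r x y v : symmetric r -> ~~ connect (induced X r) x y ->
  v \in component X r y -> v \notin component X r x.
Proof.
move=> sr nxy; rewrite !inE => yv; apply: contra nxy => xv.
by apply: connect_trans xv _; rewrite (sym_connect_sym (induced_sym X sr)).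
Qed.

Lemma component_induced_connected X r x :
  symmetric r -> induced_connected r (component X r x).
Proof.
set C := component X r x => sr.
have xC v : v \in C -> connect (induced C r) x v.
  rewrite inE => xv; suff : v \in [set w | connect (induced C r) x w] by rewrite inE.
  apply: (connect_stable _ _ xv); first by rewrite inE connect0.
  move=> u w; rewrite !inE => xu ruw.
  have uC : u \in C := connect_induced_mem (component_self X r x) xu.
  have wC : w \in C by move: uC; rewrite !inE => xu'; apply: connect_trans xu' (connect1 ruw).
  by apply: connect_trans xu (connect1 _); rewrite /induced uC wC; case/and3P: ruw.
move=> a b aC bC; apply: connect_trans (xC b bC).
by rewrite (sym_connect_sym (induced_sym C sr)) xC.
Qed.

Lemma component_nbr X r x y : x \in X :\ y -> connect (induced X r) x y ->
  exists2 k, k \in component (X :\ y) r x & r k y.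
Proof.
move=> xXy xy.
case: (boolP [exists k, (k \in component (X :\ y) r x) && r k y]).
  by case/existsP=> k /andP [kC rky]; exists k.
rewrite negb_exists => /forallP noedge.
suff : y \in component (X :\ y) r x by move/(component_mem xXy); rewrite !inE eqxx.
apply: (connect_stable (component_self _ _ _) _ xy) => u w uC /and3P [_ wX ruw].
have [wy|wy] := eqVneq w y; first by move: (noedge u); rewrite uC -wy ruw.
by apply: (component_step xXy uC) => //; rewrite !inE wy.
Qed.

Definition sub_rel X r : rel {v | v \in X} := fun u v => r (val u) (val v).
Arguments sub_rel : clear implicits.

Lemma sub_rel_simple X r : symmetric r -> irreflexive r -> simple_graph (sub_rel X r).
Proof. by move=> sr ir; split => [u v|u]; [apply: sr | apply: ir]. Qed.

Lemma sub_rel_connected X r : induced_connected r X -> graph_connected (sub_rel X r).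
Proof.
move=> Xc u v.
suff : val v \in [set w | if insub w is Some w' then connect (sub_rel X r) u w' else false].
  by rewrite inE valK.
apply: (connect_stable _ _ (Xc _ _ (valP u) (valP v))); first by rewrite inE valK connect0.
move=> a b; rewrite !inE; case: insubP => // a' _ <- ua /and3P [_ bX rab].
case: insubP => [b' _ bE|]; last by rewrite bX.
by apply: connect_trans ua (connect1 _); rewrite /sub_rel bE.
Qed.

End InducedConnectivity.
Arguments sub_rel {T} X r.

Section MinorModels.
Variable T : finType.
Implicit Types (e g : rel T) (X K : {set T}) (phi : T -> {set T}).

Definition minor_model e X g phi : Prop :=
  [/\ {in X, forall u, phi u != set0},
      {in X, forall u, induced_connected e (phi u)},
      {in X &, forall u v, u != v -> [disjoint phi u & phi v]} &
      {in X &, forall u v, g u v -> exists p q, [/\ p \in phi u, q \in phi v & e p q]}].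

Lemma minor_model_K5 e X g phi :
  minor_model e X g phi -> has_K5_minor (sub_rel X g) -> has_K5_minor e.
Proof.
move=> [phi0 phiC phiD phiE] [F [F0 [FC [FD FE]]]].
pose U i := \bigcup_(u in F i) phi (val u).
exists U; split; [|split; [|split]].
- move=> i; have /set0Pn [u uF] := F0 i; have /set0Pn [p pu] := phi0 _ (valP u).
  by apply/set0Pn; exists p; apply/bigcupP; exists u.
- move=> i p q /bigcupP [u uF pu] /bigcupP [v vF qv].
  set R := fun a b => [&& a \in U i, b \in U i & e a b].
  have inside w a b : w \in F i -> a \in phi (val w) -> b \in phi (val w) -> connect R a b.
    move=> wF aw bw; apply: connect_sub (phiC _ (valP w) _ _ aw bw) => c d /and3P [cw dw ecd].
    by apply: connect1; rewrite /R ecd andbT; apply/andP; split; apply/bigcupP; exists w.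
  suff : v \in [set w | [forall q', (q' \in phi (val w)) ==> connect R p q']].
    by rewrite inE => /forallP /(_ q); rewrite qv.
  apply: (connect_stable _ _ (FC i u v uF vF)).
    by rewrite inE; apply/forallP => q'; apply/implyP; apply: inside.
  move=> w w'; rewrite !inE => /forallP pw /and3P [wF w'F gww'].
  have [p' [q'' [p'w q''w' ep]]] := phiE _ _ (valP w) (valP w') gww'.
  apply/forallP => q'; apply/implyP => q'w'.
  apply: connect_trans (implyP (pw p') p'w) _.
  apply: connect_trans (connect1 _) (inside w' _ _ w'F q''w' q'w').
  by rewrite /R ep andbT; apply/andP; split; apply/bigcupP; [exists w | exists w'].
- move=> i j ij; apply/pred0P => p /=; apply/negbTE/negP => /andP [].
  move=> /bigcupP [u uF pu] /bigcupP [v vF pv].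
  have uv : val u != val v.
    apply/negP => /eqP /val_inj uv; subst v.
    by move/pred0P: (FD i j ij) => /(_ u) /=; rewrite uF vF.
  by move/pred0P: (phiD _ _ (valP u) (valP v) uv) => /(_ p) /=; rewrite pu pv.
- move=> i j ij; have [u [v [uF vF guv]]] := FE i j ij.
  have [p [q [pu qv epq]]] := phiE _ _ (valP u) (valP v) guv.
  by exists p, q; split => //; apply/bigcupP; [exists u | exists v].
Qed.

(* Each arc of the minor is realised by an arc of [e] between its two branch sets; the
   two arcs of the edge p0q0 realise none, since p0q0 lies within one branch set. *)
Lemma minor_model_arcs e X g phi p0 q0 :
  symmetric e -> irreflexive e -> irreflexive g -> minor_model e X g phi -> e p0 q0 ->
  {in X &, forall u v, p0 \in phi u -> q0 \in phi v -> u = v} ->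
  #|[set pr : {v | v \in X} * {v | v \in X} | sub_rel X g pr.1 pr.2]| + 2
    <= #|[set pr : T * T | e pr.1 pr.2]|.
Proof.
move=> se ie ig [_ _ phiD phiE] epq pq_in.
set Pg := [set pr : {v | v \in X} * {v | v \in X} | sub_rel X g pr.1 pr.2].
set Pe := [set pr : T * T | e pr.1 pr.2].
set P0 := [set (p0, q0); (q0, p0)].
have P0Pe : P0 \subset Pe by apply/subsetP => pq; rewrite !inE => /orP [] /eqP -> //=; rewrite se.
have cardP0 : #|P0| = 2 by rewrite cards2; case: eqP => // [[pq _]]; move: epq; rewrite pq ie.
pose m (pr : {v | v \in X} * {v | v \in X}) : T * T := odflt (p0, p0)
  [pick pq : T * T | [&& pq.1 \in phi (val pr.1), pq.2 \in phi (val pr.2) & e pq.1 pq.2]].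
have mP pr : pr \in Pg ->
    [&& (m pr).1 \in phi (val pr.1), (m pr).2 \in phi (val pr.2) & e (m pr).1 (m pr).2].
  rewrite inE => gpr; rewrite /m; case: pickP => [pq -> //|].
  have [p [q [pu qv epq']]] := phiE _ _ (valP pr.1) (valP pr.2) gpr.
  by move/(_ (p, q)); rewrite /= pu qv epq'.
have same (u v : {v | v \in X}) p : p \in phi (val u) -> p \in phi (val v) -> u = v.
  move=> pu pv; apply: val_inj; apply/eqP; apply: contraT => uv.
  by move/pred0P: (phiD _ _ (valP u) (valP v) uv) => /(_ p) /=; rewrite pu pv.
have m_inj : {in Pg &, injective m}.
  move=> pr1 pr2 /mP /and3P [a1 a2 _] /mP /and3P [b1 b2 _] m12.
  rewrite m12 in a1 a2.
  by rewrite [pr1]surjective_pairing [pr2]surjective_pairing (same _ _ _ a1 b1) (same _ _ _ a2 b2).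
have mPe : m @: Pg \subset Pe :\: P0.
  apply/subsetP => pq /imsetP [pr /[dup] /mP /and3P [a1 a2 a3] prP ->].
  rewrite !inE a3 andbT; move: prP; rewrite inE => gpr.
  have loop u v : u \in X -> v \in X -> u = v -> ~~ g u v by move=> uX vX ->; rewrite ig.
  apply/negP => /orP [] /eqP mE; rewrite mE /= in a1 a2.
    by case/negP: (loop _ _ (valP _) (valP _) (pq_in _ _ (valP _) (valP _) a1 a2)).
  by case/negP: (loop _ _ (valP _) (valP _) (esym (pq_in _ _ (valP _) (valP _) a2 a1))).
have Pe2 : 2 <= #|Pe| by rewrite -cardP0 subset_leq_card.
rewrite addnC -leq_subRL // -(card_in_imset m_inj) -cardP0 -(setIidPr P0Pe) -cardsD.
exact: subset_leq_card.
Qed.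

Lemma minor_model_nedges e X g phi p0 q0 :
  symmetric e -> irreflexive e -> irreflexive g -> minor_model e X g phi -> e p0 q0 ->
  {in X &, forall u v, p0 \in phi u -> q0 \in phi v -> u = v} ->
  nedges (sub_rel X g) < nedges e.
Proof.
move=> se ie ig model epq pq_in; rewrite /nedges.
apply: leq_trans (leq_div2r 2 (minor_model_arcs se ie ig model epq pq_in)).
by rewrite divnDr // divnn addn1 ltnSn.
Qed.

Definition contract (x : T) K (u : T) : {set T} := if u == x then K else [set u].

Lemma mem_contract_self x K u : x \in K -> u \in contract x K u.
Proof. by rewrite /contract; case: eqP => [-> //|_ _]; rewrite inE. Qed.

(* The graph [g] on [X] is a minor of [e]: [x] stands for the connected set [K] and every
   other vertex for itself. *)
Definition contraction e X g x K : Prop :=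
  [/\ x \in K, induced_connected e K, {in X, forall v, v \in K -> v = x} &
      {in X &, forall u v, g u v ->
         exists p q, [/\ p \in contract x K u, q \in contract x K v & e p q]}].

Lemma contraction_model e X g x K : contraction e X g x K -> minor_model e X g (contract x K).
Proof.
move=> [xK KC KX KE]; split => //.
- by move=> u _; apply/set0Pn; exists u; apply: mem_contract_self.
- move=> u _; rewrite /contract; case: eqP => // _ a b.
  by rewrite !inE => /eqP -> /eqP ->; apply: connect0.
- move=> u v uX vX uv; rewrite /contract.
  have notK w : w \in X -> w != x -> w \notin K by move=> wX; apply: contra => /(KX _ wX) ->.
  case: eqP => [ux|/eqP ux]; case: eqP => [vx|/eqP vx].
  + by rewrite ux vx eqxx in uv.
  + by rewrite disjoint_sym disjoints1 notK.
  + by rewrite disjoints1 notK.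
  + by rewrite disjoints1 inE.
Qed.

Lemma contraction_lost_edge e X g x K p0 q0 : contraction e X g x K ->
  p0 \in K -> q0 \notin X ->
  {in X &, forall u v, p0 \in contract x K u -> q0 \in contract x K v -> u = v}.
Proof.
move=> [_ _ KX _] p0K q0X u v uX vX; rewrite /contract.
have ux : p0 \in (if u == x then K else [set u]) -> u = x.
  by case: eqP => // _; rewrite inE => /eqP p0u; apply: KX => //; rewrite -p0u.
have vx : q0 \in (if v == x then K else [set v]) -> v = x.
  by case: eqP => // _; rewrite inE => /eqP q0v; move: q0X; rewrite q0v vX.
by move=> /ux -> /vx ->.
Qed.

Lemma contraction_induced e X x : contraction e X e x [set x].
Proof.
split; first by rewrite inE.
- by move=> a b; rewrite !inE => /eqP -> /eqP ->; apply: connect0.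
- by move=> v _; rewrite inE => /eqP.
- by move=> u v _ _ euv; exists u, v; rewrite !mem_contract_self ?inE.
Qed.

End MinorModels.

Section Happiness.
Variable T : finType.
Implicit Types (f : rel T) (c : T -> 'I_4) (X : {set T}) (s : {perm 'I_4}).

Lemma happy_transfer f (f' : rel T) c (c' : T -> 'I_4) v :
  (forall w, f v w -> exists2 w', f' v w' & c' w' = c w) ->
  (1 < #|[set w | f' v w]| -> 1 < #|[set w | f v w]|) ->
  happy f c v -> happy f' c' v.
Proof.
move=> back deg [small|[u [w [fu fw cuw]]]].
  by left; rewrite leqNgt; apply: contraL small => /deg; rewrite ltnNge.
have [u' fu' cu] := back _ fu; have [w' fw' cw] := back _ fw.
by right; exists u', w'; rewrite cu cw.
Qed.

Lemma eq_happy f (f' : rel T) c v : f v =1 f' v -> happy f c v -> happy f' c v.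
Proof.
move=> ff'; apply: happy_transfer => [w fw|]; first by exists w; rewrite -?ff'.
by have -> : [set w | f' v w] = [set w | f v w] by apply/setP => w; rewrite !inE ff'.
Qed.

Lemma happy_recolor f c (c' : T -> 'I_4) v :
  (forall w, f v w -> c' w = c w) -> happy f c v -> happy f c' v.
Proof. by move=> cc'; apply: happy_transfer => // w fw; exists w; rewrite ?cc'. Qed.

Lemma happy_perm f c s v : happy f c v -> happy f (fun w => s (c w)) v.
Proof.
case=> [small|[u [w [fu fw cuw]]]]; first by left.
by right; exists u, w; rewrite (inj_eq perm_inj).
Qed.

Lemma happy_induced X f c v : v \in X -> (forall w, f v w -> w \in X) ->
  happy (induced X f) c v -> happy f c v.
Proof.
move=> vX Xv; apply: eq_happy => w; rewrite /induced vX /=.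
by case fvw: (f v w); rewrite ?andbF ?Xv.
Qed.

Definition happy_in f c X v : Prop :=
  exists u w, [/\ f v u, f v w, u \in X, w \in X & c u != c w].

Lemma happy_in_induced X f c v : v \in X -> 2 <= #|[set w in X | f v w]| ->
  happy (induced X f) c v -> happy_in f c X v.
Proof.
move=> vX deg [small|[u [w [/and3P [_ uX fu] /and3P [_ wX fw] cuw]]]]; last by exists u, w.
have E : [set w | induced X f v w] = [set w in X | f v w].
  by apply/setP => w; rewrite !inE /induced vX.
by move: small; rewrite E leqNgt deg.
Qed.

Lemma happy_in_perm f c s X v : happy_in f c X v -> happy_in f (fun w => s (c w)) X v.
Proof. by case=> u [w [fu fw uX wX cuw]]; exists u, w; rewrite (inj_eq perm_inj). Qed.

Lemma happy_in_happy f c (c' : T -> 'I_4) X v : {in X, c =1 c'} -> happy_in f c X v -> happy f c' v.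
Proof. by move=> cc' [u [w [fu fw uX wX cuw]]]; right; exists u, w; rewrite -!cc'. Qed.

End Happiness.

(* What minimality provides for a smaller graph with a chosen root [u0]: a dynamic colouring,
   except that for C5 the root may be unhappy; then its neighbours share a colour [al], and
   [al] and the colour of the root occur nowhere else. *)
Definition rooted_coloring (U : finType) (f : rel U) (c : U -> 'I_4) (u0 : U) : Prop :=
  [/\ proper_coloring f c, forall v, v != u0 -> happy f c v &
      happy f c u0 \/ exists al, (forall v, f u0 v -> c v = al) /\
        (forall v, v != u0 -> ~~ f u0 v -> (c v != al) && (c v != c u0))].

Definition rooted_on (T : finType) (X : {set T}) (f : rel T) (c : T -> 'I_4) (u0 : T) : Prop :=
  [/\ {in X &, forall u v, f u v -> c u != c v},
      {in X, forall v, v != u0 -> happy (induced X f) c v} &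
      happy (induced X f) c u0 \/ exists al, {in X, forall v, f u0 v -> c v = al} /\
        {in X, forall v, v != u0 -> ~~ f u0 v -> (c v != al) && (c v != c u0)}].

Section LiftColoring.
Variables (T : finType) (X : {set T}).

Definition lift_col (c : {v | v \in X} -> 'I_4) (v : T) : 'I_4 :=
  if insub v is Some u then c u else ord0.

Lemma lift_colE c u : lift_col c (val u) = c u.
Proof. by rewrite /lift_col valK. Qed.

Lemma happy_lift (f : rel T) c h :
  happy (sub_rel X f) c h -> happy (induced X f) (lift_col c) (val h).
Proof.
case=> [small|[u [w [fu fw cuw]]]]; last first.
  by right; exists (val u), (val w); rewrite !lift_colE /induced (valP h) (valP u) (valP w).
left; have -> : [set w | induced X f (val h) w] = val @: [set u | sub_rel X f h u].
  apply/setP => w; rewrite inE; apply/idP/imsetP => [/and3P [_ wX fw]|[u]].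
    by exists (exist _ w wX); rewrite ?inE.
  by rewrite inE /sub_rel => fu ->; rewrite /induced (valP h) (valP u) fu.
by rewrite (card_imset _ val_inj).
Qed.

Lemma rooted_lift (f : rel T) c u0 :
  rooted_coloring (sub_rel X f) c u0 -> rooted_on X f (lift_col c) (val u0).
Proof.
have liftE v (vX : v \in X) : lift_col c v = c (exist _ v vX) by exact: lift_colE c (exist _ v vX).
have sub_neq v (vX : v \in X) : v != val u0 -> exist _ v vX != u0 by apply: contra => /eqP <-.
move=> [cP ch cr]; split.
- by move=> u v uX vX fuv; rewrite !liftE; apply: (cP (exist _ u uX) (exist _ v vX)).
- by move=> v vX vu0; apply: (happy_lift (h := exist _ v vX)); apply/ch/sub_neq.
case: cr => [cr|[al [alN alF]]]; first by left; apply: happy_lift.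
right; exists al; split => v vX; rewrite liftE ?lift_colE.
  by move=> fv; apply: (alN (exist _ v vX)).
by move=> vu0; apply: (alF (exist _ v vX)); apply: sub_neq.
Qed.

End LiftColoring.

Definition c5_col (k n : nat) : nat := nth 0 [:: 0; 1; 2; 3; 1] ((n + 5 - k) %% 5).
Definition c5_adj (i j : nat) : bool := (j == i.+1 %% 5) || (i == j.+1 %% 5).

(* The colouring 0,1,2,3,1 of C5, rotated so that vertex k gets colour 0: every other
   vertex is happy, both neighbours of k get colour 1, and the remaining two vertices
   avoid both 1 and the colour of k. *)
Definition c5_good (k i : nat) : bool :=
  [&& all (fun j => c5_adj i j ==> (c5_col k i != c5_col k j)) (iota 0 5),
      c5_adj i (i.+1 %% 5), c5_adj i ((i + 4) %% 5),
      (i != k) ==> (c5_col k (i.+1 %% 5) != c5_col k ((i + 4) %% 5)),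
      c5_adj k i ==> (c5_col k i == 1) &
      (i != k) ==> ~~ c5_adj k i ==> (c5_col k i != 1) && (c5_col k i != c5_col k k)].

Lemma c5_good_all : all (fun k => all (c5_good k) (iota 0 5)) (iota 0 5).
Proof. by vm_compute. Qed.

Lemma c5_goodP (k i : 'I_5) : c5_good k i.
Proof.
move/allP: c5_good_all => /(_ k); rewrite mem_iota ltn_ord => /(_ isT) /allP /(_ i).
by rewrite mem_iota ltn_ord; apply.
Qed.

Lemma c5_col_lt k n : c5_col k n < 4.
Proof. by rewrite /c5_col; case: ((n + 5 - k) %% 5) => [|[|[|[|[|m]]]]] //=; rewrite nth_nil. Qed.

Lemma c5_relE (i j : 'I_5) : c5_rel i j = c5_adj i j.
Proof. by []. Qed.

Lemma c5_rooted (U : finType) (f : rel U) u0 : iso_C5 f -> exists c, rooted_coloring f c u0.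
Proof.
move=> [h [[hinv hK Kh] fE]].
have col_eq (a b : nat) : a < 4 -> b < 4 -> (inord a == inord b :> 'I_4) = (a == b).
  by move=> a4 b4; rewrite -val_eqE /= !inordK.
have hE (m : nat) : m < 5 -> h (hinv (inord m)) = m :> nat by move=> m5; rewrite Kh inordK.
have h_neq v : v != u0 -> (h v : nat) != h u0.
  by apply: contra => /eqP /val_inj /(congr1 hinv); rewrite !hK => ->.
exists (fun v => inord (c5_col (h u0) (h v))); split.
- move=> v w; rewrite fE c5_relE col_eq ?c5_col_lt // => adj.
  have /and3P [/allP /(_ (h w)) + _ _] := c5_goodP (h u0) (h v).
  by rewrite mem_iota ltn_ord => /(_ isT) /implyP; apply.
- move=> v vu0; right.
  have /and5P [_ adj1 adj4 /implyP hap _] := c5_goodP (h u0) (h v).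
  exists (hinv (inord ((h v).+1 %% 5))), (hinv (inord ((h v + 4) %% 5))).
  rewrite !fE !c5_relE !hE ?ltn_pmod // col_eq ?c5_col_lt //; split => //.
  exact/hap/h_neq.
right; exists (inord 1); split => v; rewrite fE c5_relE.
  have /and5P [_ _ _ _ /andP [/implyP nbr _]] := c5_goodP (h u0) (h v).
  by move/nbr => /eqP ->.
move=> vu0 nadj; rewrite !col_eq ?c5_col_lt //.
have /and5P [_ _ _ _ /andP [_ /implyP non]] := c5_goodP (h u0) (h v).
by move: (non (h_neq _ vu0)) => /implyP; apply.
Qed.

Lemma fresh_color (p q r : 'I_4) : exists t : 'I_4, [&& t != p, t != q & t != r].
Proof.
have small : #|[set p; q; r]| < #|[set: 'I_4]|.
  rewrite cardsT card_ord (eq_card (_ : _ =i [:: p; q; r])) ?(leq_ltn_trans (card_size _)) //.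
  by move=> t; rewrite !inE orbA.
have /subsetPn [t _] : ~~ ([set: 'I_4] \subset [set p; q; r]).
  by apply: contraTN small => /subset_leq_card; rewrite -leqNgt.
by rewrite !inE !negb_or -andbA => t3; exists t.
Qed.

Lemma recolor (a1 a2 a3 b1 b2 g : 'I_4) : (a1 == a2) = (b1 == b2) ->
  exists s : {perm 'I_4}, [/\ s a1 = b1, s a2 = b2 & (a3 != a1 -> a3 != a2 -> s a3 != g)].
Proof.
move=> pat.
have [s1 s1a1 s1a2] : exists2 s1 : {perm 'I_4}, s1 a1 = b1 & s1 a2 = b2.
  exists (tperm a1 b1 * tperm (tperm a1 b1 a2) b2)%g; rewrite permM tpermL //.
  have [a12|a12] := eqVneq a1 a2.
    have /eqP b12 : b1 == b2 by rewrite -pat a12.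
    by rewrite -a12 !tpermL b12.
  apply: tpermD; last by rewrite eq_sym -pat.
  by rewrite -[X in _ != X](tpermL a1 b1) (inj_eq perm_inj) eq_sym.
case: (boolP [&& a3 != a1, a3 != a2 & s1 a3 == g]) => [/and3P [a31 a32 /eqP s1g]|good]; last first.
  by exists s1; split => // a31 a32; apply: contra good => s1g; rewrite a31 a32 s1g.
have [t /and3P [tb1 tb2 ts]] := fresh_color b1 b2 (s1 a3).
exists (s1 * tperm (s1 a3) t)%g; rewrite !permM s1a1 s1a2 tpermL -s1g; split => //.
- by apply: tpermD => //; rewrite -s1a1 (inj_eq perm_inj).
- by apply: tpermD => //; rewrite -s1a2 (inj_eq perm_inj).
Qed.

Section TwoCut.
Variables (T : finType) (e : rel T) (A B : {set T}) (x y : T).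

Record cut2 : Prop := Cut2 {
  cut_sym : symmetric e;
  cut_irr : irreflexive e;
  cut_conn : graph_connected e;
  cut_cover : A :|: B = setT;
  cut_A : A :\: B != set0;
  cut_B : B :\: A != set0;
  cut_edge : forall u v, u \in A :\: B -> v \in B :\: A -> ~~ e u v;
  cut_set : A :&: B = [set x; y];
  cut_neq : x != y }.

Hypothesis Hc : cut2.

Lemma cut_mem v : (v \in A :&: B) = (v == x) || (v == y).
Proof. by rewrite (cut_set Hc) !inE. Qed.

Lemma cut_xy : [/\ x \in A, x \in B, y \in A & y \in B].
Proof.
have := cut_mem x; have := cut_mem y; rewrite !eqxx orbT /=.
by rewrite !inE => /andP [-> ->] /andP [-> ->].
Qed.

Lemma cut_notA v : v \notin A -> v \in B :\: A.
Proof. by move=> vA; move: (in_setT v); rewrite -(cut_cover Hc) !inE (negbTE vA). Qed.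

Lemma cut_AnotB v : v \in A -> v != x -> v != y -> v \in A :\: B.
Proof.
move=> vA vx vy; rewrite inE vA andbT; apply/negP => vB.
by move: (cut_mem v); rewrite inE vA vB (negbTE vx) (negbTE vy).
Qed.

Lemma cut_nbrA a w : a \in A :\: B -> e a w -> w \in A.
Proof.
move=> aAB eaw; apply: contraT => /cut_notA wBA.
by move: (cut_edge Hc aAB wBA); rewrite eaw.
Qed.

Lemma cut_component_exit s w w' : s \in A -> w \in component A e s ->
  w' \notin component A e s -> e w w' -> ((w == x) || (w == y)) && (w' \in B :\: A).
Proof.
move=> sA wC w'C eww'; have wA := component_mem sA wC.
have w'BA : w' \in B :\: A.
  by apply: cut_notA; apply: contra w'C => w'A; apply: component_step eww'.
rewrite w'BA andbT -cut_mem inE wA /=; apply: contraT => wB.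
have wAB : w \in A :\: B by rewrite inE wB wA.
by move: (cut_edge Hc wAB w'BA); rewrite eww'.
Qed.

Lemma cut_reach v : v \in A -> exists2 s, (s == x) || (s == y) & connect (induced A e) v s.
Proof.
move=> vA; have /set0Pn [t tBA] := cut_B Hc.
have tC : t \notin component A e v.
  by apply: contraL tBA => /(component_mem vA) tA; rewrite inE tA.
have [w [w' [wC w'C eww']]] := boundary_edge (cut_conn Hc) (component_self A e v) tC.
have /andP [wxy _] := cut_component_exit vA wC w'C eww'.
by exists w; last by move: wC; rewrite inE.
Qed.

Lemma cut_induced_connected (r : rel T) :
  symmetric r -> subrel e r -> connect (induced A r) x y -> induced_connected r A.
Proof.
move=> sr er xy a b aA bA.
have up u v : connect (induced A e) u v -> connect (induced A r) u v.
  by apply: connect_sub => c d /and3P [cA dA ecd]; apply: connect1; rewrite /induced cA dA er.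
have sym u v : connect (induced A r) u v -> connect (induced A r) v u.
  by rewrite (sym_connect_sym (induced_sym A sr)).
have [s1 s1xy as1] := cut_reach aA; have [s2 s2xy bs2] := cut_reach bA.
apply: connect_trans (up _ _ as1) (connect_trans _ (sym _ _ (up _ _ bs2))).
by case/orP: s1xy => /eqP ->; case/orP: s2xy => /eqP ->; rewrite ?connect0 ?(sym _ _ xy).
Qed.

End TwoCut.

Lemma cut2_flip (T : finType) (e : rel T) A B x y : cut2 e A B x y -> cut2 e B A x y.
Proof.
case=> se ie ce cov sA sB sep S xy; split; rewrite 1?setIC //; first by rewrite setUC.
by move=> u v uBA vAB; rewrite se sep.
Qed.

Lemma cut2_swap (T : finType) (e : rel T) A B x y : cut2 e A B x y -> cut2 e A B y x.
Proof. by case=> se ie ce cov sA sB sep S xy; split; rewrite // 1?S 1?setUC // eq_sym. Qed.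

Lemma cut_boundary (T : finType) (e : rel T) A B x y : cut2 e A B x y ->
  exists s b, [/\ (s == x) || (s == y), b \in B :\: A & e s b].
Proof.
move=> Hc; have /set0Pn [v vBA] := cut_B Hc; have /set0Pn [t tAB] := cut_A Hc.
have tBA : t \notin B :\: A by move: tAB; rewrite !inE => /andP [/negbTE -> _]; rewrite andbF.
have [w [w' [wBA w'BA eww']]] := boundary_edge (cut_conn Hc) vBA tBA.
have w'AB : w' \notin A :\: B.
  by apply/negP => w'AB; move: (cut_edge Hc w'AB wBA); rewrite (cut_sym Hc) eww'.
exists w', w; split; last by rewrite (cut_sym Hc).
  move: w'AB w'BA (in_setT w'); rewrite -(cut_cover Hc) -(cut_mem Hc) !inE.
  by case: (w' \in A); case: (w' \in B).
by [].
Qed.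

Record sep2 (T : finType) (e : rel T) (A B : {set T}) (x y : T) : Prop := Sep2 {
  sep_cut :> cut2 e A B x y;
  sep_degx : 2 <= #|[set u in A | e x u]|;
  sep_degy : 2 <= #|[set u in A | e y u]| }.

Lemma sep2_swap (T : finType) (e : rel T) A B x y : sep2 e A B x y -> sep2 e A B y x.
Proof. by case=> Hc dx dy; split => //; apply: cut2_swap. Qed.

Lemma sep_nbr (T : finType) (e : rel T) A B x y : sep2 e A B x y ->
  exists2 a, a \in A :\: B & e x a.
Proof.
move=> Hs; have /card_gt1P [u [w [uA wA uw]]] := sep_degx Hs.
move: uA wA; rewrite !inE => /andP [uA exu] /andP [wA exw].
have ux : u != x by apply: contraTneq exu => ->; rewrite (cut_irr Hs).
have wx : w != x by apply: contraTneq exw => ->; rewrite (cut_irr Hs).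
have [uy|uy] := eqVneq u y.
  by exists w => //; apply: (cut_AnotB Hs) => //; rewrite -uy eq_sym.
by exists u => //; apply: (cut_AnotB Hs).
Qed.

Definition side_coloring (T : finType) (e : rel T) (X Y : {set T}) (c : T -> 'I_4) : Prop :=
  {in X &, forall u v, e u v -> c u != c v} /\ {in X :\: Y, forall v, happy e c v}.

Lemma side_coloring_perm (T : finType) (e : rel T) X Y c (s : {perm 'I_4}) :
  side_coloring e X Y c -> side_coloring e X Y (fun v => s (c v)).
Proof.
case=> cP ch; split => [u v uX vX euv|v vXY]; last exact/happy_perm/ch.
by rewrite (inj_eq perm_inj); apply: cP.
Qed.

Lemma rooted_side (T : finType) (e : rel T) A B x y c r :
  cut2 e A B x y -> rooted_on A e c r -> r \in B -> side_coloring e A B c.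
Proof.
move=> Hc [cP ch _] rB; split => // v vAB; have vA : v \in A by case/setDP: vAB.
apply: (happy_induced vA); first by move=> w; apply: (cut_nbrA Hc).
by apply: ch => //; apply: contraTneq vAB => ->; rewrite inE rB.
Qed.

Lemma rooted_happy_in (T : finType) (e : rel T) X c r v :
  rooted_on X e c r -> v \in X -> v != r -> 2 <= #|[set w in X | e v w]| -> happy_in e c X v.
Proof. by move=> [_ ch _] vX vr deg; apply: happy_in_induced => //; apply: ch. Qed.

Definition glue (T : finType) (A : {set T}) (cA cB : T -> 'I_4) (v : T) : 'I_4 :=
  if v \in A then cA v else cB v.

Section Glue.
Variables (T : finType) (e : rel T) (A B : {set T}) (x y : T) (cA cB : T -> 'I_4).
Hypothesis Hc : cut2 e A B x y.
Hypotheses (cx : cA x = cB x) (cy : cA y = cB y).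

Lemma glue_A v : v \in A -> glue A cA cB v = cA v.
Proof. by rewrite /glue => ->. Qed.

Lemma glue_B v : v \in B -> glue A cA cB v = cB v.
Proof.
rewrite /glue; case: ifP => // vA vB.
by move: (cut_mem Hc v); rewrite inE vA vB => /esym /orP [] /eqP ->.
Qed.

Lemma glue_happy_in_A v : happy_in e cA A v -> happy e (glue A cA cB) v.
Proof. by apply: happy_in_happy => u uA; rewrite glue_A. Qed.

Lemma glue_happy_in_B v : happy_in e cB B v -> happy e (glue A cA cB) v.
Proof. by apply: happy_in_happy => u uB; rewrite glue_B. Qed.

Lemma glue_dyn4 : side_coloring e A B cA -> side_coloring e B A cB ->
  happy e (glue A cA cB) x -> happy e (glue A cA cB) y -> dyn4_colorable e.
Proof.
move=> [pA hA] [pB hB] hx hy; have se := cut_sym Hc.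
have inB u v : e u v -> v \notin A -> u \in B.
  move=> euv vA; apply: contraT => uB.
  by move: (cut_edge Hc (cut_notA (cut2_flip Hc) uB) (cut_notA Hc vA)); rewrite euv.
have notA_B v : v \notin A -> v \in B by move/(cut_notA Hc); case/setDP.
exists (glue A cA cB); split.
  move=> u v euv; case: (boolP (v \in A)) => vA.
    case: (boolP (u \in A)) => uA; first by rewrite !glue_A //; apply: pA.
    have vB : v \in B by apply: (inB v u); rewrite // se.
    by have uB := notA_B u uA; rewrite !glue_B //; apply: pB.
  have uB := inB u v euv vA; have vB := notA_B v vA.
  by rewrite !glue_B //; apply: pB.
move=> v; have [->|vx] := eqVneq v x => //; have [->|vy] := eqVneq v y => //.
case: (boolP (v \in A)) => vA.
  have vAB := cut_AnotB Hc vA vx vy.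
  by apply: happy_recolor (hA _ vAB) => w evw; rewrite glue_A // (cut_nbrA Hc vAB).
have vBA := cut_notA Hc vA.
apply: happy_recolor (hB _ vBA) => w evw.
by rewrite glue_B // (cut_nbrA (cut2_flip Hc) vBA).
Qed.

End Glue.

Lemma glue_matching (T : finType) (e : rel T) A B x y cA cB :
  cut2 e A B x y -> side_coloring e A B cA -> side_coloring e B A cB ->
  happy_in e cA A x -> happy_in e cA A y -> (cB x == cB y) = (cA x == cA y) ->
  dyn4_colorable e.
Proof.
move=> Hc sA sB hx hy pat.
have [s [sx sy _]] := recolor ord0 ord0 pat.
apply: (glue_dyn4 (cB := fun v => s (cB v)) Hc (esym sx) (esym sy) sA).
- exact: side_coloring_perm.
- exact: glue_happy_in_A.
- exact: glue_happy_in_A.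
Qed.

Definition smaller_dyn4 (T : finType) (e : rel T) : Prop :=
  forall (T' : finType) (e' : rel T'),
    simple_graph e' -> graph_connected e' -> ~ has_K5_minor e' -> ~ iso_C5 e' ->
    nedges e' < nedges e -> dyn4_colorable e'.

Definition twin_condition (T : finType) (e : rel T) (A B : {set T}) : Prop :=
  (exists2 w, w \in B :\: A & nbhd e w = A :&: B) ->
  (exists x y, [/\ x \in A :&: B, y \in A :&: B & e x y]) \/
  (exists2 w, w \in A :\: B & nbhd e w = A :&: B).

Definition join_rel (T : finType) (e : rel T) (x y : T) : rel T :=
  fun a b => [|| e a b, (a == x) && (b == y) | (a == y) && (b == x)].

(* Identifying [y] with [x]: on a vertex set avoiding [y], [x] inherits the edges of [y]. *)
Definition merge_rel (T : finType) (e : rel T) (x y : T) : rel T :=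
  fun a b => [|| e a b, (a == x) && e y b | (b == x) && e a y].

Section JoinMerge.
Variables (T : finType) (e : rel T) (x y : T).
Hypotheses (se : symmetric e) (ie : irreflexive e) (xy : x != y).

Lemma join_rel_sym : symmetric (join_rel e x y).
Proof.
by move=> u v; rewrite /join_rel se; congr (_ || _); rewrite orbC; congr (_ || _); apply: andbC.
Qed.

Lemma join_rel_irr : irreflexive (join_rel e x y).
Proof.
move=> u; rewrite /join_rel ie /=; apply/negP => /orP [] /andP [/eqP -> /eqP E].
  by move: xy; rewrite E eqxx.
by move: xy; rewrite E eqxx.
Qed.

Lemma merge_rel_sym : symmetric (merge_rel e x y).
Proof. by move=> u v; rewrite /merge_rel se; congr (_ || _); rewrite orbC [e u y]se [e y v]se. Qed.

Lemma merge_rel_irr : ~~ e x y -> irreflexive (merge_rel e x y).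
Proof.
move=> nxy u; rewrite /merge_rel ie /=; apply/negP => /orP [] /andP [/eqP ->].
  by rewrite se (negbTE nxy).
by rewrite (negbTE nxy).
Qed.

End JoinMerge.

Lemma merge_connected (T : finType) (e : rel T) A B x y :
  cut2 e A B x y -> induced_connected (merge_rel e x y) (B :\ y).
Proof.
move=> Hc; have Hf := cut2_flip Hc; have [_ xB _ _] := cut_xy Hc.
set X := B :\ y; set g := merge_rel e x y.
have xX : x \in X by rewrite !inE (cut_neq Hc) xB.
have sX := induced_sym X (merge_rel_sym x y (cut_sym Hc)).
have reach w : w \in B -> (w == y) || connect (induced X g) x w.
  move=> wB; have [s sxy ws] := cut_reach Hf wB.
  rewrite (sym_connect_sym (induced_sym B (cut_sym Hc))) in ws.
  suff : w \in [set z | (z == y) || connect (induced X g) x z] by rewrite inE.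
  apply: (connect_stable _ _ ws).
    by rewrite inE; case/orP: sxy => /eqP ->; rewrite ?eqxx ?connect0 ?orbT.
  move=> u v; rewrite !inE => /orP [/eqP -> | xu] /and3P [_ vB euv].
    have [vy|vy] := eqVneq v y; first by [].
    have [->|vx] := eqVneq v x; first by rewrite connect0 orbT.
    apply/orP; right; apply: connect1.
    by rewrite /induced xX !inE vy vB /g /merge_rel eqxx euv orbT.
  have [vy|vy] := eqVneq v y; first by [].
  have uX := connect_induced_mem xX xu.
  by apply: connect_trans xu (connect1 _); rewrite /induced uX !inE vy vB /g /merge_rel euv.
move=> c d cX dX; have [cy cB] := setD1P cX; have [dy dB] := setD1P dX.
move: (reach c cB) (reach d dB); rewrite (negbTE cy) (negbTE dy) /= => xc xd.
by apply: connect_trans xd; rewrite (sym_connect_sym sX).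
Qed.

(* Identifying [y] with [x] can cost a vertex of [B :\: A] a neighbour only if the vertex is
   adjacent to exactly [x] and [y]. *)
Lemma merge_degree (T : finType) (e : rel T) A B x y b :
  cut2 e A B x y -> b \in B :\: A -> nbhd e b != [set x; y] -> 1 < #|nbhd e b| ->
  1 < #|[set w | induced (B :\ y) (merge_rel e x y) b w]|.
Proof.
move=> Hc bBA Nb deg; have [_ xB yA _] := cut_xy Hc; have [bB bA] := setDP bBA.
have nbB w : e b w -> w \in B := cut_nbrA (cut2_flip Hc) bBA.
have bX : b \in B :\ y by rewrite !inE bB andbT; apply: contraNneq bA => ->.
have [n3 bn3 n3xy] : exists2 n3, e b n3 & n3 \notin [set x; y].
  case: (boolP (nbhd e b \subset [set x; y])) => [sub|/subsetPn [n3]].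
    by case/negP: Nb; rewrite eqEcard sub cards2 (cut_neq Hc).
  by rewrite inE; exists n3.
have [n bn nn3] : exists2 n, e b n & n != n3.
  move/card_gt1P: deg => [u [w [bu bw uw]]]; rewrite !inE in bu bw.
  by have [un3|un3] := eqVneq u n3; [exists w; rewrite // -un3 eq_sym | exists u].
move: n3xy; rewrite !inE negb_or => /andP [n3x n3y].
apply/card_gt1P; exists n3, (if n == y then x else n); split.
- by rewrite !inE /induced bX !inE n3y nbB // /merge_rel bn3.
- rewrite !inE /induced bX /merge_rel; case: eqP => [ny|/eqP ny].
    by rewrite !inE (cut_neq Hc) xB eqxx -ny bn !orbT.
  by rewrite !inE ny nbB // bn.
- by have [_|_] := eqVneq n y; rewrite // eq_sym.
Qed.

Section SeparatedCut.
Variables (T : finType) (e : rel T) (A B : {set T}) (x y : T).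
Hypotheses (Hc : cut2 e A B x y) (nA : ~~ connect (induced A e) x y).

Lemma separated_nbr : exists2 b, b \in B :\: A & e x b.
Proof.
have [xA _ _ _] := cut_xy Hc; have yC : y \notin component A e x by rewrite inE.
have [w [w' [wC w'C eww']]] := boundary_edge (cut_conn Hc) (component_self A e x) yC.
have /andP [wxy w'BA] := cut_component_exit Hc xA wC w'C eww'.
case/orP: wxy => /eqP wE; last by rewrite wE (negbTE yC) in wC.
by exists w'; rewrite // -wE.
Qed.

Lemma separated_connect : connect (induced B e) x y.
Proof.
have Hf := cut2_flip Hc; have [xA xB _ _] := cut_xy Hc; apply: contraT => nB.
set K := component A e x :|: component B e x.
have xK : x \in K by rewrite inE component_self.
have yK : y \notin K by rewrite !inE negb_or nA nB.
have [w [w' [wK w'K eww']]] := boundary_edge (cut_conn Hc) xK yK.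
move: w'K; rewrite inE negb_or => /andP [w'A w'B].
case/setUP: wK => wC.
  have /andP [wxy /setDP [w'B' _]] := cut_component_exit Hc xA wC w'A eww'.
  case/orP: wxy => /eqP wE; last by rewrite wE inE (negbTE nA) in wC.
  by rewrite wE in eww'; rewrite (component_step xB (component_self B e x) w'B' eww') in w'B.
have /andP [wxy /setDP [w'A' _]] := cut_component_exit Hf xB wC w'B eww'.
case/orP: wxy => /eqP wE; last by rewrite wE inE (negbTE nB) in wC.
by rewrite wE in eww'; rewrite (component_step xA (component_self A e x) w'A' eww') in w'A.
Qed.

Lemma separated_component_nbr v w :
  v \in component A e x -> v != x -> e v w -> w \in component A e x.
Proof.
move=> vC vx evw; have [xA _ _ _] := cut_xy Hc.
have vy : v != y by apply: contraNneq nA => vE; move: vC; rewrite vE inE.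
have vAB := cut_AnotB Hc (component_mem xA vC) vx vy.
exact: component_step xA vC (cut_nbrA Hc vAB evw) evw.
Qed.

End SeparatedCut.

Lemma separated_cover (T : finType) (e : rel T) A B x y v : cut2 e A B x y -> v \in A ->
  (v \in component A e x) || (v \in component A e y).
Proof.
move=> Hc vA; have [s sxy vs] := cut_reach Hc vA.
rewrite (sym_connect_sym (induced_sym A (cut_sym Hc))) in vs.
by case/orP: sxy => /eqP sE; rewrite !inE -sE vs ?orbT.
Qed.

Lemma separated_side (T : finType) (e : rel T) A B x y (cx cy : T -> 'I_4) :
  cut2 e A B x y -> ~~ connect (induced A e) x y ->
  {in component A e x &, forall u v, e u v -> cx u != cx v} ->
  {in component A e x, forall v, v != x -> happy e cx v} ->
  {in component A e y &, forall u v, e u v -> cy u != cy v} ->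
  {in component A e y, forall v, v != y -> happy e cy v} ->
  side_coloring e A B (fun v => if v \in component A e x then cx v else cy v).
Proof.
move=> Hc nA px hx py hy; have [xA xB yA yB] := cut_xy Hc.
have nA' : ~~ connect (induced A e) y x by rewrite (sym_connect_sym (induced_sym A (cut_sym Hc))).
set cA := fun v => _; have cAx v : v \in component A e x -> cA v = cx v by rewrite /cA => ->.
have cAy v : v \in component A e y -> cA v = cy v.
  by move=> vK; rewrite /cA (negbTE (component_disjoint (cut_sym Hc) nA vK)).
split=> [u v uA vA euv|v /setDP [vA vB]].
  case/orP: (separated_cover Hc uA) => uK.
    have vK := component_step xA uK vA euv; rewrite !cAx //; exact: px.
  have vK := component_step yA uK vA euv; rewrite !cAy //; exact: py.
have [vx vy] : v != x /\ v != y by split; apply: contraNneq vB => ->.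
case/orP: (separated_cover Hc vA) => vK.
  apply: happy_recolor (hx _ vK vx) => w evw.
  by rewrite cAx // (separated_component_nbr Hc nA vK vx evw).
apply: happy_recolor (hy _ vK vy) => w evw.
by rewrite cAy // (separated_component_nbr (cut2_swap Hc) nA' vK vy evw).
Qed.

Section MinimalCounterexample.
Variables (T : finType) (e : rel T).
Hypotheses (He : smaller_dyn4 e) (HK : ~ has_K5_minor e).
Hypotheses (se : symmetric e) (ie : irreflexive e).

Lemma rooted_smaller (U : finType) (f : rel U) u0 :
  simple_graph f -> graph_connected f -> ~ has_K5_minor f -> nedges f < nedges e ->
  exists c, rooted_coloring f c u0.
Proof.
move=> sf cf Kf lt; case: (classic (iso_C5 f)) => [/(c5_rooted u0) //|nC5].
have [c [cP ch]] := He sf cf Kf nC5 lt.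
by exists c; split => //; left.
Qed.

Lemma rooted_contraction X g x K p0 q0 r :
  symmetric g -> irreflexive g -> induced_connected g X -> contraction e X g x K ->
  e p0 q0 -> p0 \in K -> q0 \notin X -> r \in X -> exists c, rooted_on X g c r.
Proof.
move=> sg ig Xc XK epq p0K q0X rX; have model := contraction_model XK.
have [c rc] := rooted_smaller (exist _ r rX) (sub_rel_simple X sg ig) (sub_rel_connected Xc)
  (fun K5 => HK (minor_model_K5 model K5))
  (minor_model_nedges se ie ig model epq (contraction_lost_edge XK p0K q0X)).
by exists (lift_col c); exact: rooted_lift rc.
Qed.

Lemma rooted_induced X p0 q0 r : induced_connected e X ->
  e p0 q0 -> q0 \notin X -> r \in X -> exists c, rooted_on X e c r.
Proof.
move=> Xc epq q0X rX.
by apply: (rooted_contraction se ie Xc (contraction_induced e X p0) epq _ q0X rX); rewrite inE.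
Qed.

Lemma adjacent_cut_dyn4 A B x y b :
  sep2 e A B x y -> e x y -> b \in B :\: A -> e x b -> dyn4_colorable e.
Proof.
move=> Hs exy bBA exb; have Hf := cut2_flip Hs; have [bB bA] := setDP bBA.
have [xA xB yA yB] := cut_xy Hs; have [a aAB exa] := sep_nbr Hs; have [_ aB] := setDP aAB.
have Ac : induced_connected e A.
  by apply: (cut_induced_connected Hs se) => //; apply: connect1; rewrite /induced xA yA.
have Bc : induced_connected e B.
  by apply: (cut_induced_connected Hf se) => //; apply: connect1; rewrite /induced xB yB.
have [cA rA] := rooted_induced Ac exb bA xA.
have [cB rB] := rooted_induced Bc exa aB yB.
have pat : (cB x == cB y) = (cA x == cA y).
  case: rA rB => pA _ _ [pB _ _].
  by rewrite (negbTE (pA _ _ xA yA exy)) (negbTE (pB _ _ xB yB exy)).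
have [s [sx sy _]] := recolor ord0 ord0 pat.
apply: (glue_dyn4 (cB := fun v => s (cB v)) Hs (esym sx) (esym sy) (rooted_side Hs rA xB)).
- exact/side_coloring_perm/(rooted_side Hf rB yA).
- apply: (glue_happy_in_B Hs (esym sx) (esym sy)); apply/happy_in_perm/(rooted_happy_in rB xB).
    exact: cut_neq Hs.
  apply/card_gt1P; exists y, b; rewrite !inE yB bB exy exb; split => //.
  by apply: contraNneq bA => <-.
- apply: glue_happy_in_A; apply: (rooted_happy_in rA yA _ (sep_degy Hs)).
  by rewrite eq_sym (cut_neq Hs).
Qed.

Lemma twin_free A B x y (cA : T -> 'I_4) : cut2 e A B x y -> ~~ e x y ->
  {in A :\: B, forall v, happy e cA v} -> cA x = cA y -> twin_condition e A B ->
  {in B :\: A, forall w, nbhd e w != [set x; y]}.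
Proof.
move=> Hc nxy hA cxy twin w wBA; apply/eqP => Nw.
case: twin; first by exists w; rewrite // (cut_set Hc).
  case=> u [v [+ + euv]]; rewrite !(cut_mem Hc) => /orP [] /eqP uE /orP [] /eqP vE;
  by move: euv; rewrite uE vE ?ie ?(negbTE nxy) // se (negbTE nxy).
case=> w' w'AB Nw'; rewrite (cut_set Hc) in Nw'.
have cl z : e w' z -> cA z = cA x.
  move=> ew'z; have : z \in nbhd e w' by rewrite inE.
  by rewrite Nw' !inE => /orP [] /eqP ->.
case: (hA _ w'AB) => [small|[u [v [eu ev]]]]; last by rewrite (cl u eu) (cl v ev) eqxx.
by move: small; rewrite -/(nbhd e w') Nw' cards2 (cut_neq Hc).
Qed.

Lemma join_side A B x y : sep2 e A B x y -> ~~ e x y -> connect (induced A e) x y ->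
  exists cB, side_coloring e B A cB /\ cB x != cB y.
Proof.
move=> Hs nxy xyA; have Hf := cut2_flip Hs; have xy := cut_neq Hs.
have [xA xB yA yB] := cut_xy Hs; have [a aAB exa] := sep_nbr Hs; have [_ aB] := setDP aAB.
set g := join_rel e x y; have gxy : g x y by rewrite /g /join_rel !eqxx orbT.
have eg : subrel e g by move=> u v euv; rewrite /g /join_rel euv.
have xAy : x \in A :\ y by rewrite !inE xA xy.
have [k kK eky] := component_nbr xAy xyA.
have XK : contraction e B g x (component (A :\ y) e x).
  split; [exact: component_self | exact: component_induced_connected |..].
    move=> v vB /(component_mem xAy); rewrite !inE => /andP [vy vA].
    by move: (cut_mem Hs v); rewrite inE vA vB (negbTE vy) orbF => /esym /eqP.
  have yK : y \in contract x (component (A :\ y) e x) y by rewrite /contract eq_sym (negbTE xy) inE.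
  move=> u v uB vB; rewrite /g /join_rel => /or3P [euv|/andP [/eqP-> /eqP->]|/andP [/eqP-> /eqP->]].
  - by exists u, v; rewrite !mem_contract_self ?component_self.
  - by exists k, y; split => //; rewrite /contract eqxx.
  - by exists y, k; split => //; [rewrite /contract eqxx | rewrite se].
have Bc : induced_connected g B.
  apply: (cut_induced_connected Hf (join_rel_sym x y se) eg).
  by apply: connect1; rewrite /induced xB yB.
have [c [cP ch _]] := rooted_contraction (join_rel_sym x y se) (join_rel_irr ie xy) Bc XK exa
  (component_self _ _ _) aB xB.
exists c; split; last exact: cP.
split => [u v uB vB /eg|v vBA]; first exact: cP.
have [vB vA] := setDP vBA.
have [vx vy] : v != x /\ v != y by split; apply: contraNneq vA => ->.
apply: (happy_induced vB); first by move=> w; apply: (cut_nbrA Hf vBA).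
apply: (eq_happy (f := induced B g)); last exact: ch.
by move=> w; rewrite /induced /g /join_rel (negbTE vx) (negbTE vy) !orbF.
Qed.

Lemma merge_side A B x y : sep2 e A B x y -> ~~ e x y -> connect (induced A e) x y ->
  {in B :\: A, forall w, nbhd e w != [set x; y]} ->
  exists cB, side_coloring e B A cB /\ cB x = cB y.
Proof.
move=> Hs nxy xyA twins; have Hf := cut2_flip Hs; have xy := cut_neq Hs.
have [xA xB yA _] := cut_xy Hs; have [a aAB exa] := sep_nbr Hs; have [_ aB] := setDP aAB.
set X := B :\ y; set g := merge_rel e x y.
have xX : x \in X by rewrite !inE xy xB.
have XA : contraction e X g x A.
  split => //; first exact: (cut_induced_connected Hs se).
    move=> v /setD1P [vy vB] vA.
    by move: (cut_mem Hs v); rewrite inE vA vB (negbTE vy) orbF => /esym /eqP.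
  have cx u : u \in contract x A u by apply: mem_contract_self.
  have cA : A = contract x A x by rewrite /contract eqxx.
  move=> u v uX vX; rewrite /g /merge_rel => /or3P [euv|/andP [/eqP-> eyv]|/andP [/eqP-> euy]].
  - by exists u, v.
  - by exists y, v; rewrite -cA.
  - by exists u, y; rewrite -cA.
have aX : a \notin X by rewrite !inE (negbTE aB) andbF.
have [c [cP ch _]] := rooted_contraction (merge_rel_sym x y se) (merge_rel_irr se ie nxy)
  (merge_connected Hs) XA exa xA aX xX.
exists (fun v => if v == y then c x else c v); split; last by rewrite eqxx (negbTE xy).
split.
  have inX u : u \in B -> u != y -> u \in X by move=> uB uy; rewrite !inE uy.
  move=> u v uB vB euv; have [uy|uy] := eqVneq u y; have [vy|vy] := eqVneq v y.
  - by rewrite uy vy ie in euv.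
  - by apply: cP; rewrite ?inX // /g /merge_rel eqxx -uy euv orbT.
  - by apply: cP; rewrite ?inX // /g /merge_rel eqxx -vy euv !orbT.
  - by apply: cP; rewrite ?inX // /g /merge_rel euv.
move=> b bBA; have [bB bA] := setDP bBA.
have [bx by_] : b != x /\ b != y by split; apply: contraNneq bA => ->.
have bX : b \in X by rewrite !inE by_.
apply: (happy_transfer (f := induced X g) (c := c)); last exact: ch.
  move=> w /and3P [_ wX]; rewrite /g /merge_rel (negbTE bx) /= => /orP [ebw|/andP [/eqP -> eby]].
    by exists w; rewrite // ifN //; case/setD1P: wX.
  by exists y; rewrite ?eqxx.
exact: merge_degree Hs bBA (twins b bBA).
Qed.

Lemma joined_cut_dyn4 A B x y b : sep2 e A B x y -> ~~ e x y -> connect (induced A e) x y ->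
  b \in B :\: A -> e x b -> twin_condition e A B -> dyn4_colorable e.
Proof.
move=> Hs nxy xyA bBA exb twin; have [bB bA] := setDP bBA.
have [xA xB yA _] := cut_xy Hs; have yx : y != x by rewrite eq_sym (cut_neq Hs).
have [cA rA] := rooted_induced (cut_induced_connected Hs se (fun _ _ => id) xyA) exb bA xA.
have sA := rooted_side Hs rA xB.
have hy : happy_in e cA A y := rooted_happy_in rA yA yx (sep_degy Hs).
case: rA => _ _ [hx|[al [alN alF]]].
  have {}hx : happy_in e cA A x := happy_in_induced xA (sep_degx Hs) hx.
  have [cxy|cxy] := eqVneq (cA x) (cA y).
    have [cB [sB cBxy]] := merge_side Hs nxy xyA (twin_free Hs nxy sA.2 cxy twin).
    by apply: (glue_matching Hs sA sB hx hy); rewrite cBxy cxy !eqxx.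
  have [cB [sB cBxy]] := join_side Hs nxy xyA.
  by apply: (glue_matching Hs sA sB hx hy); rewrite (negbTE cBxy) (negbTE cxy).
(* x is unhappy inside A, all its neighbours there having colour al: permute the colours
   of B so that b avoids al. *)
have [cB [[pB hB] cBxy]] := join_side Hs nxy xyA.
have [a aAB exa] := sep_nbr Hs; have [aA _] := setDP aAB.
have /andP [yal ycx] := alF y yA yx nxy.
have pat : (cB x == cB y) = (cA x == cA y) by rewrite (negbTE cBxy) eq_sym (negbTE ycx).
have [s [sx sy sb]] := recolor (cB b) al pat.
apply: (glue_dyn4 (cB := fun v => s (cB v)) Hs (esym sx) (esym sy) sA); last first.
- exact: glue_happy_in_A.
- right; exists a, b; rewrite glue_A // (glue_B Hs (esym sx) (esym sy) bB) (alN a aA exa).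
  split => //; have [cby|cby] := eqVneq (cB b) (cB y); first by rewrite cby sy eq_sym.
  by rewrite eq_sym sb // pB // se.
- exact: side_coloring_perm.
Qed.

Lemma component_coloring A B x y bx tx tb : sep2 e A B x y -> ~~ connect (induced A e) x y ->
  bx \in B :\: A -> e x bx ->
  exists c : T -> 'I_4, [/\ {in component A e x &, forall u v, e u v -> c u != c v},
    {in component A e x, forall v, v != x -> happy e c v}, c x = tx &
    exists2 a, e x a & (a \in component A e x) && (c a != tb)].
Proof.
move=> Hs nA bxBA exbx; have [xA _ _ _] := cut_xy Hs; have [_ bxA] := setDP bxBA.
have xK := component_self A e x.
have bxK : bx \notin component A e x by apply: contra bxA; apply: component_mem.
have [c [cP ch _]] := rooted_induced (@component_induced_connected _ A e x se) exbx bxK xK.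
have [a aAB exa] := sep_nbr Hs; have aK := component_step xA xK (setDP aAB).1 exa.
have cax : c a != c x by apply: cP; rewrite // se.
have pat : (c x == c x) = (tx == tx) by rewrite !eqxx.
have [s [sx _ sa]] := recolor (c a) tb pat.
exists (fun v => s (c v)); split => //.
- by move=> u v uK vK euv; rewrite (inj_eq perm_inj); apply: cP.
- move=> v vK vx; apply/happy_perm/(happy_induced vK); last exact: ch.
  by move=> w; apply: (separated_component_nbr Hs nA vK vx).
- by exists a; rewrite // aK sa.
Qed.

Lemma separated_cut_dyn4 A B x y :
  sep2 e A B x y -> ~~ connect (induced A e) x y -> dyn4_colorable e.
Proof.
move=> Hs nA; have Hf := cut2_flip Hs; have Hs' := sep2_swap Hs.
have nA' : ~~ connect (induced A e) y x by rewrite (sym_connect_sym (induced_sym A se)).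
have [xA xB yA _] := cut_xy Hs; have [a aAB exa] := sep_nbr Hs; have [_ aB] := setDP aAB.
have [bx bxBA exbx] := separated_nbr Hs nA; have [bxB _] := setDP bxBA.
have [by_ byBA eyby] := separated_nbr Hs' nA'; have [byB _] := setDP byBA.
have Bc := cut_induced_connected Hf se (fun _ _ => id) (separated_connect Hs nA).
have [cB rB] := rooted_induced Bc exa aB xB.
have [cx [px hx cxx [ax exax /andP [axK cax]]]] :=
  component_coloring (cB x) (cB bx) Hs nA bxBA exbx.
have [cy [py hy cyy [ay eyay /andP [ayK cay]]]] :=
  component_coloring (cB y) (cB by_) Hs' nA' byBA eyby.
have sA := separated_side Hs nA px hx py hy; set cA := fun v => _ in sA.
have ex : cA x = cB x by rewrite /cA component_self.
have ey : cA y = cB y by rewrite /cA (negbTE (component_disjoint se nA (component_self A e y))).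
have axA := component_mem xA axK; have ayA := component_mem yA ayK.
apply: (glue_dyn4 Hs ex ey sA (rooted_side Hf rB xA)).
- by right; exists ax, bx; rewrite glue_A // (glue_B Hs ex ey bxB) /cA axK.
- right; exists ay, by_; rewrite glue_A // (glue_B Hs ex ey byB) /cA.
  by rewrite (negbTE (component_disjoint se nA ayK)).
Qed.

Lemma cut_dyn4 A B x y : sep2 e A B x y -> (exists2 b, b \in B :\: A & e x b) ->
  twin_condition e A B -> dyn4_colorable e.
Proof.
move=> Hs [b bBA exb] twin.
have [exy|nxy] := boolP (e x y); first exact: adjacent_cut_dyn4 Hs exy bBA exb.
have [xyA|nxyA] := boolP (connect (induced A e) x y); last exact: separated_cut_dyn4 Hs nxyA.
exact: joined_cut_dyn4 Hs nxy xyA bBA exb twin.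
Qed.

End MinimalCounterexample.

Theorem lemma3p1 (T : finType) (e : rel T) :
  simple_graph e -> graph_connected e -> ~ has_K5_minor e -> ~ iso_C5 e ->
  ~ dyn4_colorable e ->
  (forall (T' : finType) (e' : rel T'),
      simple_graph e' -> graph_connected e' -> ~ has_K5_minor e' -> ~ iso_C5 e' ->
      nedges e' < nedges e -> dyn4_colorable e') ->
  ~ exists A B : {set T},
      [/\ separation e A B,
          #|A :&: B| = 2,
          (forall v, v \in A :&: B -> 2 <= #|[set u in A | e v u]|) &
          ((exists2 w, w \in B :\: A & nbhd e w = A :&: B) ->
             (exists x y, [/\ x \in A :&: B, y \in A :&: B & e x y]) \/
             (exists2 w, w \in A :\: B & nbhd e w = A :&: B))].
Proof.
move=> [se ie] conn HK _ ndyn He [A [B [[cov AB BA sep] card2 deg twin]]].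
have /cards2P [x [y [xy S]]] : #|A :&: B| == 2 by rewrite card2.
have Hs : sep2 e A B x y by split; [|apply: deg; rewrite S !inE eqxx ?orbT..].
apply: ndyn; have [s [b [sxy bBA esb]]] := cut_boundary Hs.
case/orP: sxy => /eqP sE; rewrite sE in esb.
  by apply: (cut_dyn4 He HK se ie Hs _ twin); exists b.
by apply: (cut_dyn4 He HK se ie (sep2_swap Hs) _ twin); exists b.
Qed.
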